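(* Let $g\ge 0$ and $n\ge 1$. The number of pseudo-3-regular graphs corresponding to (pants decompositions of) hyperbolic surfaces of genus $g$ with $n$ cusps is at most $n\,g^{3g}(3g-3+3n)^n$.
   Context: A pants decomposition of a finite-area hyperbolic surface of genus $g$ with $n$ cusps is a collection of disjoint simple closed geodesics whose complement is a disjoint union of pairs of pants (spheres with three holes, each hole being a boundary geodesic or a cusp). A connected graph with free edges (edges having a free, unattached end) is pseudo-3-regular if every node has exactly three emanating half-edges (a loop counts twice), which may or may not have a free end. The graph corresponding to a pants decomposition has one node per pair of pants, one half-edge per boundary component or cusp of that pair of pants; two half-edges are joined into an edge when the corresponding boundary geodesics are glued in the surface, and half-edges corresponding to cusps are free edges. *)

From mathcomp Require Import all_boot all_fingroup.
Set Implicit Arguments. Unset Strict Implicit. Unset Printing Implicit Defensive.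

(* Half-edge encoding of a pseudo-3-regular graph with V nodes:
   half-edges are 'I_(3*V); half-edge h emanates from node h %/ 3, so each
   node carries exactly three half-edges (a loop uses two of them).
   A permutation s that is an involution pairs half-edges into edges;
   a fixed point of s is a half-edge with free end, i.e. a free edge. *)

Definition hadj (V : nat) (s : {perm 'I_(3 * V)}) : rel 'I_(3 * V) :=
  fun h h' => (h %/ 3 == h' %/ 3) || (s h == h').

Definition pseudo3 (V : nat) (n : nat) (s : {perm 'I_(3 * V)}) : bool :=
  [&& [forall h : 'I_(3 * V), s (s h) == h],
      #|[set h | s h == h]| == n &
      [forall h : 'I_(3 * V), forall h' : 'I_(3 * V), connect (hadj s) h h']].

Definition graph_iso (V : nat) (s t : {perm 'I_(3 * V)}) : bool :=
  [exists f : {perm 'I_(3 * V)},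
     [forall h : 'I_(3 * V), forall h' : 'I_(3 * V), (h %/ 3 == h' %/ 3) == (f h %/ 3 == f h' %/ 3)]
     && [forall h : 'I_(3 * V), f (s h) == t (f h)]].

Definition graph_classes (V n : nat) : {set {set {perm 'I_(3 * V)}}} :=
  [set [set t | pseudo3 n t && graph_iso s t] | s in [set s | pseudo3 n s]].

(* Graphs corresponding to pants decompositions of surfaces of genus g with
   n cusps: one node per pair of pants; Euler characteristic gives
   V = 2g - 2 + n nodes (if 2g - 2 + n < 0 there is no such surface). *)
Definition num_pants_graphs (g n : nat) : nat :=
  if 2 <= 2 * g + n then #|graph_classes (2 * g + n - 2) n| else 0.

From mathcomp Require Import all_boot all_fingroup.
From mathcomp Require Import zify ring.

(* A graph with V = 2g - 2 + n nodes, n free edges and k = 3g - 3 + n internal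
   edges is encoded by an involution s of the 3V = n + 2k half-edges whose
   fixed points are the free ends.  The proof is a double count:

   1. Involutions: cutting an edge of an involution with n fixed points
      yields one with n + 2 fixed points and two marked ones; iterating,
      #|involutions with n fixed points| * n! k! 2^k <= (3V)!.
   2. Isomorphism classes: the V! 3^V relabelings (permute the nodes, rotate
      the three half-edges at each node) act on a class, and since the graph
      is connected a relabeling is recovered from the conjugate graph plus the
      image of one half-edge.  Hence every class has at least V! 3^V / 3V
      members, and #|classes| * V! 3^V <= 3V * #|graphs|.
   3. Arithmetic: 3V (3V)! <= n g^(3g) (3g+3n-3)^n * V! 3^V * n! k! 2^k,
      proved by induction on n (and on g along the row n = 1) through the
      ratio of consecutive terms, each step being a polynomial inequality. *)

Set Implicit Arguments. Unset Strict Implicit. Unset Printing Implicit Defensive.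

Definition involutions (m n : nat) : {set {perm 'I_m}} :=
  [set s : {perm 'I_m} | [forall h, s (s h) == h] && (#|[set h | s h == h]| == n)].

Lemma card_dep_pairs (I J : finType) (P : pred I) (Q : I -> pred J) :
  #|[set p : I * J | P p.1 && Q p.1 p.2]| = \sum_(i | P i) #|[set j | Q i j]|.
Proof.
rewrite -sum1dep_card -(pair_big_dep P Q (fun _ _ => 1)).
by apply: eq_bigr => i _; rewrite sum1dep_card.
Qed.

Section CutEdge.
Variables m n : nat.

Definition edge_marked : {set {perm 'I_m} * 'I_m} :=
  [set p | (p.1 \in involutions m n) && (p.1 p.2 != p.2)].

Definition free_marked : {set {perm 'I_m} * ('I_m * 'I_m)} :=
  [set q | (q.1 \in involutions m n.+2) &&
           ((q.1 q.2.1 == q.2.1) && ((q.1 q.2.2 == q.2.2) && (q.2.1 != q.2.2)))].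

Definition cut_edge (p : {perm 'I_m} * 'I_m) : {perm 'I_m} * ('I_m * 'I_m) :=
  ((p.1 * tperm p.2 (p.1 p.2))%g, (p.2, p.1 p.2)).

(* The marks remember the cut edge, so it can be glued back. *)
Lemma cut_edge_inj : injective cut_edge.
Proof.
move=> [s a] [s' a'] [e_perm e_mark e_partner] /=.
subst a'; rewrite /= e_partner in e_perm.
by move/mulIg: e_perm => ->.
Qed.

Lemma cut_edge_marked p : p \in edge_marked -> cut_edge p \in free_marked.
Proof.
case: p => s a; rewrite inE => /andP [/= s_inv sa_a]; move: s_inv.
rewrite inE => /andP [/forallP s_invol /eqP s_fix].
set b := s a; set t := (s * tperm a b)%g.
have sK x : s (s x) = x by apply/eqP.
have ab : a != b by rewrite eq_sym.
have sxa x : x != b -> s x != a by apply: contra => /eqP e; rewrite /b -e sK.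
have sxb x : x != a -> s x != b by apply: contra; rewrite /b (inj_eq perm_inj).
have ta : t a = a by rewrite permM tpermR.
have tb : t b = b by rewrite permM sK tpermL.
have tE x : x != a -> x != b -> t x = s x.
  by move=> xa xb; rewrite permM tpermD // eq_sym ?sxa ?sxb.
have t_fix : [set h | t h == h] = a |: (b |: [set h | s h == h]).
  apply/setP => x; rewrite !inE.
  have [->|xa] := eqVneq x a; first by rewrite ta eqxx.
  have [->|xb] := eqVneq x b; first by rewrite tb eqxx.
  by rewrite tE.
rewrite !inE /= ta tb ab !eqxx !andbT; apply/andP; split.
  apply/forallP => x.
  have [->|xa] := eqVneq x a; first by rewrite !ta.
  have [->|xb] := eqVneq x b; first by rewrite !tb.
  by rewrite tE // tE ?sK ?sxa ?sxb.
rewrite t_fix cardsU1 cardsU1 s_fix !inE negb_or ab.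
by move: sa_a; rewrite /b sK [a == _]eq_sym; case: (s a == a).
Qed.

Lemma card_edge_marked : #|edge_marked| = #|involutions m n| * (m - n).
Proof.
rewrite (card_dep_pairs (fun s => s \in involutions m n) (fun s a => s a != a)).
rewrite (eq_bigr (fun _ => m - n)) ?sum_nat_cond_const; last first.
  move=> s; rewrite inE => /andP [_ /eqP s_fix].
  have := cardsC [set h | s h == h]; rewrite s_fix card_ord.
  have -> : #|~: [set h | s h == h]| = #|[set a | s a != a]|.
    by apply: eq_card => x; rewrite !inE.
  lia.
by congr (_ * _); apply: eq_card => s; rewrite inE.
Qed.

Lemma card_free_marked : #|free_marked| = #|involutions m n.+2| * (n.+2 * n.+1).
Proof.
rewrite (card_dep_pairs (fun s => s \in involutions m n.+2)
  (fun s (ab : 'I_m * 'I_m) => (s ab.1 == ab.1) && ((s ab.2 == ab.2) && (ab.1 != ab.2)))).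
rewrite (eq_bigr (fun _ => n.+2 * n.+1)) ?sum_nat_cond_const; last first.
  move=> t; rewrite inE => /andP [_ /eqP t_fix].
  rewrite (card_dep_pairs (fun a => t a == a) (fun a b => (t b == b) && (a != b))).
  rewrite (eq_bigr (fun _ => n.+1)) ?sum_nat_cond_const ?t_fix 1?mulnC //.
  move=> a ta; have := cardsD1 a [set h | t h == h].
  rewrite t_fix inE ta add1n => -[->].
  by apply: eq_card => x; rewrite !inE andbC eq_sym.
by congr (_ * _); apply: eq_card => s; rewrite inE.
Qed.

(* Cutting the marked edge injects edge_marked into free_marked. *)
Lemma involutions_step :
  #|involutions m n| * (m - n) <= #|involutions m n.+2| * (n.+2 * n.+1).
Proof.
rewrite -card_edge_marked -card_free_marked -(card_imset _ cut_edge_inj).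
by apply/subset_leq_card/subsetP => q /imsetP [p /cut_edge_marked + ->].
Qed.
End CutEdge.

(* Only the identity fixes every point. *)
Lemma involutions_all_fixed (m : nat) : #|involutions m m| <= 1.
Proof.
rewrite -(cards1 (1%g : {perm 'I_m})); apply/subset_leq_card/subsetP => s.
rewrite !inE => /andP [_ /eqP s_fix].
have all_fixed : [set h | s h == h] = setT.
  by apply/eqP; rewrite eqEcard subsetT cardsT card_ord s_fix leqnn.
apply/eqP/permP => x; rewrite perm1.
by have := in_setT x; rewrite -all_fixed inE => /eqP.
Qed.

Lemma card_involutions_le (m k : nat) : 2 * k <= m ->
  #|involutions m (m - 2 * k)| * ((m - 2 * k)`! * k`! * 2 ^ k) <= m`!.
Proof.
elim: k => [|k IH] k_le.
  by rewrite muln0 subn0 fact0 expn0 !muln1 -{2}(mul1n m`!) leq_mul2r involutions_all_fixed orbT.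
set q := m - 2 * k.+1.
have cut_count : m - q = 2 * k.+1 by rewrite /q; lia.
have free_count : m - 2 * k = q.+2 by rewrite /q; lia.
have step := involutions_step m q; rewrite cut_count in step.
have k_le' : 2 * k <= m by lia.
apply: leq_trans (IH k_le'); rewrite free_count.
rewrite !factS expnS.
apply: leq_trans (_ : #|involutions m q| * (2 * k.+1) * (q`! * k`! * 2 ^ k) <= _); first by rewrite eq_leq //; ring.
apply: leq_trans (leq_mul step (leqnn _)) _.
by rewrite eq_leq //; ring.
Qed.

(* Counting graphs through their gluings, which are involutions of the 3V
   half-edges with n fixed points. *)
Lemma card_pseudo3_le (V n k : nat) : 3 * V = n + 2 * k ->
  #|[set s : {perm 'I_(3 * V)} | pseudo3 n s]| * (n`! * k`! * 2 ^ k) <= (3 * V)`!.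
Proof.
move=> e_half.
have two_k : 2 * k <= 3 * V by lia.
have := card_involutions_le two_k; rewrite (_ : 3 * V - 2 * k = n); last by lia.
apply: leq_trans; rewrite leq_mul2r; apply/orP; right.
by apply/subset_leq_card/subsetP => s; rewrite !inE => /and3P [-> -> _].
Qed.

Lemma connect_hom (T : finType) (e1 e2 : rel T) (f : T -> T) :
  (forall x y, e1 x y -> e2 (f x) (f y)) ->
  forall x y, connect e1 x y -> connect e2 (f x) (f y).
Proof.
move=> hom x _ /connectP [p e1_p ->].
elim: p x e1_p => [|z p IHp] x /=; first by rewrite connect0.
by case/andP=> /hom e2_xz /IHp; apply: connect_trans (connect1 e2_xz).
Qed.

Lemma connect_stable (T : finType) (e : rel T) (P : pred T) :
  (forall x y, P x -> e x y -> P y) -> forall x y, connect e x y -> P x -> P y.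
Proof.
move=> stable x _ /connectP [p e_p ->].
elim: p x e_p => [|z p IHp] x //= /andP [e_xz e_p] Px.
exact: IHp e_p (stable _ _ Px e_xz).
Qed.

Section Relabel.
Variable V : nat.
Local Notation H := ('I_(3 * V)).
Implicit Types (s t f : {perm H}) (p : {perm 'I_V}) (r : {ffun 'I_V -> 'I_3}).

Lemma node_subproof (x : H) : x %/ 3 < V.
Proof. by rewrite ltn_divLR // [V * 3]mulnC ltn_ord. Qed.

Definition node (x : H) : 'I_V := Ordinal (node_subproof x).

Lemma node_eq (x y : H) : x %/ 3 == y %/ 3 -> node x = node y.
Proof. by move/eqP => e; apply: val_inj. Qed.

(* Relabeling by a permutation p of the nodes and a rotation r of the three
   half-edges at each node: the half-edge of slot j at node i goes to slot
   j + r i (mod 3) at node p i. *)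
Lemma relabel_subproof p r (x : H) : 3 * p (node x) + (x %% 3 + r (node x)) %% 3 < 3 * V.
Proof.
have := ltn_ord (p (node x)); have : (x %% 3 + r (node x)) %% 3 < 3 by rewrite ltn_mod.
lia.
Qed.

Definition relabel_fun p r (x : H) : H := Ordinal (relabel_subproof p r x).

Lemma relabel_fun_node p r x : relabel_fun p r x %/ 3 = p (node x).
Proof. by rewrite /= mulnC divnMDl // divn_small ?addn0 // ltn_mod. Qed.

Lemma relabel_fun_mod p r x : relabel_fun p r x %% 3 = (x %% 3 + r (node x)) %% 3.
Proof. by rewrite /= mulnC modnMDl modn_mod. Qed.

Lemma relabel_fun_inj p r : injective (relabel_fun p r).
Proof.
move=> x y e.
have e_node : node x = node y.
  apply: (@perm_inj _ p); apply: val_inj.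
  by rewrite /= -(relabel_fun_node p r x) -(relabel_fun_node p r y) e.
have /eqP : (x %% 3 + r (node x)) %% 3 = (y %% 3 + r (node x)) %% 3.
  by rewrite -(relabel_fun_mod p r x) e relabel_fun_mod e_node.
rewrite eqn_modDr !modn_mod => /eqP e_mod.
apply: val_inj; rewrite /= (divn_eq x 3) (divn_eq y 3) e_mod.
by have := congr1 val e_node => /= ->.
Qed.

Definition relabel p r : {perm H} := perm (@relabel_fun_inj p r).

Lemma relabel_node p r x : relabel p r x %/ 3 = p (node x).
Proof. by rewrite permE relabel_fun_node. Qed.

Lemma relabel_part p r (x y : H) :
  (x %/ 3 == y %/ 3) = (relabel p r x %/ 3 == relabel p r y %/ 3).
Proof.
by rewrite !relabel_node val_eqE (inj_eq perm_inj) -val_eqE.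
Qed.

Lemma relabel_agree p r p' r' x :
  relabel p r x = relabel p' r' x -> p (node x) = p' (node x) /\ r (node x) = r' (node x).
Proof.
move=> e; have e_node : p (node x) = p' (node x).
  by apply: val_inj; rewrite /= -(relabel_node p r x) -(relabel_node p' r' x) e.
split=> //; apply: val_inj.
have /eqP : relabel p r x %% 3 = relabel p' r' x %% 3 by rewrite e.
by rewrite !permE !relabel_fun_mod eqn_modDl !modn_small ?ltn_ord // => /eqP.
Qed.

Definition respects_nodes f : Prop :=
  forall x y : H, (x %/ 3 == y %/ 3) = (f x %/ 3 == f y %/ 3).

Lemma hadj_conj s f x y : respects_nodes f -> hadj s x y -> hadj (s ^ f)%g (f x) (f y).
Proof.
move=> f_nodes /orP [same_node | /eqP <-]; apply/orP; first by left; rewrite -f_nodes.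
by right; rewrite permJ.
Qed.

Lemma pseudo3_conj n s f : respects_nodes f -> pseudo3 n s -> pseudo3 n (s ^ f)%g.
Proof.
move=> f_nodes /and3P [/forallP s_invol /eqP s_fix /forallP s_conn].
apply/and3P; split.
- apply/forallP => x; rewrite -(permKV f x) !permJ.
  by rewrite (eqP (s_invol _)).
- have -> : [set h | (s ^ f)%g h == h] = (f^-1)%g @^-1: [set h | s h == h].
    apply/setP => h; rewrite !inE; symmetry.
    by rewrite -(inj_eq (@perm_inj _ f)) -(permJ s f) !permKV.
  by rewrite card_preimset ?s_fix //; exact: perm_inj.
- apply/forallP => x; apply/forallP => y.
  rewrite -(permKV f x) -(permKV f y).
  apply: (connect_hom (e1 := hadj s)); first by move=> u v; exact: hadj_conj.
  by have /forallP := s_conn ((f^-1)%g x); apply.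
Qed.

Lemma graph_iso_conj s f : respects_nodes f -> graph_iso s (s ^ f)%g.
Proof.
move=> f_nodes; apply/existsP; exists f; apply/andP; split.
  by apply/forallP => x; apply/forallP => y; rewrite f_nodes.
by apply/forallP => h; rewrite permJ.
Qed.

Lemma graph_iso_sym s t : graph_iso s t -> graph_iso t s.
Proof.
case/existsP => f /andP [/forallP f_nodes /forallP f_comm].
apply/existsP; exists (f^-1)%g; apply/andP; split.
  apply/forallP => x; apply/forallP => y.
  by have /forallP /(_ ((f^-1)%g y)) := f_nodes ((f^-1)%g x); rewrite !permKV eq_sym.
apply/forallP => h; apply/eqP.
by have := f_comm ((f^-1)%g h); rewrite permKV => /eqP <-; rewrite permK.
Qed.

Lemma graph_iso_trans s t u : graph_iso s t -> graph_iso t u -> graph_iso s u.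
Proof.
case/existsP => f /andP [/forallP f_nodes /forallP f_comm].
case/existsP => f' /andP [/forallP f'_nodes /forallP f'_comm].
apply/existsP; exists (f * f')%g; apply/andP; split.
  apply/forallP => x; apply/forallP => y; rewrite !permM.
  have /forallP /(_ y) /eqP -> := f_nodes x.
  by have /forallP := f'_nodes (f x); apply.
by apply/forallP => h; rewrite !permM (eqP (f_comm h)) (eqP (f'_comm (f h))).
Qed.

Lemma relabel_determined s h0 p r p' r' :
  (forall x, connect (hadj s) h0 x) ->
  (s ^ relabel p r)%g = (s ^ relabel p' r')%g -> relabel p r h0 = relabel p' r' h0 ->
  p = p' /\ r = r'.
Proof.
move=> conn e_conj e_h0.
have stable u v : relabel p r u == relabel p' r' u -> hadj s u v ->
    relabel p r v == relabel p' r' v.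
  move=> /eqP e_u /orP [same_node | /eqP <-].
    have [e_p e_r] := relabel_agree e_u; rewrite (node_eq same_node) in e_p e_r.
    by apply/eqP/val_inj; rewrite /= !permE /= e_p e_r.
  by rewrite -(permJ s (relabel p r)) e_conj e_u permJ.
have agree x : relabel p r x = relabel p' r' x.
  by apply/eqP; apply: (connect_stable stable (conn x)); rewrite e_h0.
have node_onto (i : 'I_V) : exists x : H, node x = i.
  have lt_i : 3 * i < 3 * V by rewrite ltn_pmul2l.
  by exists (Ordinal lt_i); apply: val_inj; rewrite /= mulKn.
split; [apply/permP | apply/ffunP] => i; have [x <-] := node_onto i;
  by have [] := relabel_agree (agree x).
Qed.

(* Each isomorphism class is large: the V! 3^V relabelings, recorded together
   with the image of a fixed free half-edge, give distinct members. *)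
Lemma card_class_ge n s : 0 < n -> pseudo3 n s ->
  V`! * 3 ^ V <= #|[set t | pseudo3 n t && graph_iso s t]| * (3 * V).
Proof.
move=> n_gt0 s_p3; have /and3P [_ /eqP s_fix /forallP s_conn] := s_p3.
have [h0 _] : exists h0, h0 \in [set h | s h == h] by apply/card_gt0P; rewrite s_fix.
pose Phi (pr : {perm 'I_V} * {ffun 'I_V -> 'I_3}) :=
  ((s ^ relabel pr.1 pr.2)%g, relabel pr.1 pr.2 h0).
have Phi_inj : injective Phi.
  have conn x : connect (hadj s) h0 x by have /forallP := s_conn h0; apply.
  move=> [p r] [p' r'] [e_conj e_h0].
  by have [-> ->] := relabel_determined conn e_conj e_h0.
have -> : V`! * 3 ^ V = #|{: {perm 'I_V} * {ffun 'I_V -> 'I_3}}|.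
  by rewrite card_prod card_Sn card_ffun !card_ord.
set K := [set t | pseudo3 n t && graph_iso s t].
have -> : #|K| * (3 * V) = #|setX K [set: H]| by rewrite cardsX cardsT card_ord.
rewrite -(card_imset _ Phi_inj).
apply/subset_leq_card/subsetP => q /imsetP [[p r] _ ->].
by rewrite !inE pseudo3_conj ?graph_iso_conj //; exact: relabel_part.
Qed.

(* Isomorphism classes are disjoint and each has at least V! 3^V / 3V members. *)
Lemma card_classes_le n : 0 < n ->
  #|graph_classes V n| * (V`! * 3 ^ V) <= 3 * V * #|[set s : {perm H} | pseudo3 n s]|.
Proof.
move=> n_gt0.
set P := [set s : {perm H} | pseudo3 n s]; set C := graph_classes V n.
have classP B : B \in C -> exists2 s, s \in P & B = [set t | pseudo3 n t && graph_iso s t].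
  by move/imsetP.
have disjoint : trivIset C.
  apply/trivIsetP => A B /classP [s1 _ ->] /classP [s2 _ ->]; apply: contraR.
  rewrite -setI_eq0 => /set0Pn [u]; rewrite !inE => /andP [/andP [_ iso1] /andP [_ iso2]].
  apply/eqP/setP => t; rewrite !inE; case: (pseudo3 n t) => //=.
  apply/idP/idP => iso_t.
    exact: graph_iso_trans (graph_iso_trans iso2 (graph_iso_sym iso1)) iso_t.
  exact: graph_iso_trans (graph_iso_trans iso1 (graph_iso_sym iso2)) iso_t.
rewrite -sum_nat_const.
apply: (@leq_trans (\sum_(B in C) #|B| * (3 * V))).
  by apply: leq_sum => B /classP [s s_p3 ->]; rewrite inE in s_p3; exact: card_class_ge.
rewrite -big_distrl /= (eqP disjoint) mulnC leq_mul2l; apply/orP; right.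
apply/subset_leq_card/bigcupsP => B /classP [s _ ->].
by apply/subsetP => t; rewrite !inE => /andP [].
Qed.

End Relabel.

(* The arithmetic inequality behind the bound, for V = 2g + n - 2 nodes and
   k = 3g + n - 3 internal edges (so that k + 2n = 3g + 3n - 3). *)
Definition pants_ineq (g n V k : nat) : Prop :=
  3 * V * (3 * V)`! <= n * g ^ (3 * g) * (k + 2 * n) ^ n * (V`! * 3 ^ V) * (n`! * k`! * 2 ^ k).

Lemma leq_pow_base (m n e : nat) : m <= n -> m ^ e <= n ^ e.
Proof. by case: e => [|e] // mn; rewrite leq_exp2r. Qed.

(* Passing an inequality L <= R to the next term through the ratios
   L' / L = q / p <= R' / R. *)
Lemma ratio_step (p q L R L' R' : nat) :
  0 < p -> L <= R -> L' * p = L * q -> R * q <= R' * p -> L' <= R'.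
Proof.
move=> p_gt0 LR eL eR; rewrite -(leq_pmul2r p_gt0) eL.
exact: leq_trans (leq_mul LR (leqnn q)) eR.
Qed.

(* Ratio estimate for n -> n + 1: it reduces to the three elementary facts
   below (k + 1 >= V and 2(g + n) >= V + 3 by the Euler relations). *)
Lemma step_n_poly (g n V k : nat) : 0 < n -> 0 < V -> 2 * g + n = V + 2 -> 3 * g + n = k + 3 ->
  n * ((3 * V + 3) ^ 2 * (3 * V + 2) * (3 * V + 1))
  <= 3 * V * ((n + 1) * (k + 2 * n + 3) * (V + 1) * 3 * (n + 1) * (k + 1) * 2).
Proof.
move=> n_gt0 V_gt0 eV ek.
have edges : V * (V + 3) <= (k + 1) * (2 * (g + n)) by apply: leq_mul; lia.
have am_gm : 4 * n <= (n + 1) ^ 2 by rewrite !expnS expn0; nia.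
have cubic : (V + 1) * (3 * V + 2) * (3 * V + 1) <= 12 * V ^ 2 * (V + 3).
  by rewrite !expnS expn0; nia.
have -> : k + 2 * n + 3 = 3 * (g + n) by lia.
suff core : n * (V + 1) * (3 * V + 2) * (3 * V + 1) <= 6 * V * (n + 1) ^ 2 * (k + 1) * (g + n).
  apply: leq_trans (_ : 9 * (V + 1) * (n * (V + 1) * (3 * V + 2) * (3 * V + 1)) <= _).
    by rewrite eq_leq //; ring.
  apply: leq_trans (leq_mul (leqnn _) core) _.
  by rewrite eq_leq //; ring.
apply: leq_trans (_ : n * ((V + 1) * (3 * V + 2) * (3 * V + 1)) <= _); first by rewrite !mulnA.
apply: leq_trans (leq_mul (leqnn n) cubic) _.
apply: leq_trans (_ : 3 * V * (4 * n) * (V * (V + 3)) <= _); first by rewrite eq_leq //; ring.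
apply: leq_trans (leq_mul (leq_mul (leqnn _) am_gm) edges) _.
by rewrite eq_leq //; ring.
Qed.

Lemma pants_ineq_step_n (g n V k : nat) : 0 < n -> 0 < V -> 2 * g + n = V + 2 -> 3 * g + n = k + 3 ->
  pants_ineq g n V k -> pants_ineq g n.+1 V.+1 k.+1.
Proof.
move=> n_gt0 V_gt0 eV ek IH; rewrite /pants_ineq in IH *.
set q := (3 * V + 3) ^ 2 * (3 * V + 2) * (3 * V + 1).
apply: (ratio_step (p := 3 * V) (q := q) _ IH); first by rewrite muln_gt0.
  have -> : 3 * V.+1 = (3 * V).+3 by lia.
  by rewrite !factS /q; ring.
have -> : k.+1 + 2 * n.+1 = k + 2 * n + 3 by lia.
rewrite !factS !expnS.
set C := g ^ (3 * g) * (V`! * 3 ^ V) * (n`! * k`! * 2 ^ k).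
apply: leq_trans (_ : C * (n * q) * (k + 2 * n) ^ n <= _); first by rewrite eq_leq // /C; ring.
apply: leq_trans (leq_mul (leq_mul (leqnn C) (step_n_poly n_gt0 V_gt0 eV ek))
  (leq_pow_base n (leq_addr 3 (k + 2 * n)))) _.
by rewrite eq_leq // /C; ring.
Qed.

(* Ratio estimate for g -> g + 1 at n = 1, once g^(3g) is bounded by
   (g+1)^(3g); that bound is too crude for g = 1, hence the hypothesis 1 < g. *)
Lemma step_g_poly (g V k : nat) : 1 < g -> 2 * g + 1 = V + 2 -> 3 * g + 1 = k + 3 ->
  (k + 2) * ((3 * V + 6) ^ 2 * (3 * V + 5) * (3 * V + 4) * (3 * V + 3) * (3 * V + 2) * (3 * V + 1))
  <= 3 * V * ((g + 1) ^ 3 * (k + 5) * (V + 2) * (V + 1) * 9 * (k + 3) * (k + 2) * (k + 1) * 8).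
Proof.
case: g => [|[|c]] // _ eV ek.
have -> : V = 2 * c + 3 by lia.
have -> : k = 3 * c + 4 by lia.
have core : (2 * c + 5) * (6 * c + 13) * (6 * c + 11) <= 2 * (2 * c + 3) * (c + 3) ^ 3 * (3 * c + 9).
  by rewrite !expnS expn0; nia.
set K := 108 * (3 * c + 6) * (2 * c + 5) * (3 * c + 7) * (2 * c + 4) * (3 * c + 5).
apply: leq_trans (_ : K * ((2 * c + 5) * (6 * c + 13) * (6 * c + 11)) <= _).
  by rewrite eq_leq // /K; ring.
apply: leq_trans (leq_mul (leqnn K) core) _.
by rewrite eq_leq // /K; ring.
Qed.

Lemma pants_ineq_step_g (g V k : nat) : 1 < g -> 2 * g + 1 = V + 2 -> 3 * g + 1 = k + 3 ->
  pants_ineq g 1 V k -> pants_ineq g.+1 1 V.+2 k.+3.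
Proof.
move=> g_gt1 eV ek IH; rewrite /pants_ineq in IH *.
set q := (3 * V + 6) ^ 2 * (3 * V + 5) * (3 * V + 4) * (3 * V + 3) * (3 * V + 2) * (3 * V + 1).
apply: (ratio_step (p := 3 * V) (q := q) _ IH); first by rewrite muln_gt0; lia.
  have -> : 3 * V.+2 = (3 * V).+2.+4 by lia.
  by rewrite !factS /q; ring.
have -> : 3 * g.+1 = 3 + 3 * g by lia.
rewrite expnD !factS fact0 !expnS !expn0.
set C := V`! * 3 ^ V * (k`! * 2 ^ k).
apply: leq_trans (_ : C * g ^ (3 * g) * ((k + 2) * q) <= _); first by rewrite eq_leq // /C; ring.
apply: leq_trans (leq_mul (leq_mul (leqnn C) (leq_pow_base (3 * g) (leqnSn g)))
  (step_g_poly g_gt1 eV ek)) _.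
by rewrite eq_leq // /C; ring.
Qed.

Lemma pants_ineq_base_g1 : pants_ineq 1 1 1 1.
Proof. by []. Qed.

Lemma pants_ineq_base_g2 : pants_ineq 2 1 3 4.
Proof. by rewrite /pants_ineq !factS fact0 !expnS expn0; lia. Qed.

Lemma pants_ineq_base_g0 : pants_ineq 0 3 1 0.
Proof. by []. Qed.

Lemma pants_ineq_row (g V k : nat) : 0 < g -> 2 * g + 1 = V + 2 -> 3 * g + 1 = k + 3 ->
  pants_ineq g 1 V k.
Proof.
elim: g V k => [|[|[|g]] IH] V k // _ eV ek.
- have -> : V = 1 by lia.
  have -> : k = 1 by lia.
  exact: pants_ineq_base_g1.
- have -> : V = 3 by lia.
  have -> : k = 4 by lia.
  exact: pants_ineq_base_g2.
have -> : V = (V - 2).+2 by lia.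
have -> : k = (k - 3).+3 by lia.
apply: pants_ineq_step_g; [lia | lia | lia | apply: IH; lia].
Qed.

Lemma pants_ineq_column (g n V k m : nat) : 0 < n -> 0 < V -> 2 * g + n = V + 2 -> 3 * g + n = k + 3 ->
  pants_ineq g n V k -> pants_ineq g (n + m) (V + m) (k + m).
Proof.
move=> n_gt0 V_gt0 eV ek base; elim: m => [|m IH]; first by rewrite !addn0.
by rewrite !addnS; apply: pants_ineq_step_n IH; lia.
Qed.

Lemma pants_ineq_holds (g n : nat) : 0 < n -> 3 <= 2 * g + n ->
  pants_ineq g n (2 * g + n - 2) (3 * g + n - 3).
Proof.
move=> n_gt0; case: (posnP g) => [->|g_gt0] pants_gt0.
  have := pants_ineq_column (n - 3) _ _ _ _ pants_ineq_base_g0.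
  have -> : 3 + (n - 3) = n by lia.
  have -> : 1 + (n - 3) = 2 * 0 + n - 2 by lia.
  have -> : 0 + (n - 3) = 3 * 0 + n - 3 by lia.
  by apply.
have row := pants_ineq_row (V := 2 * g - 1) (k := 3 * g - 2) g_gt0.
have := pants_ineq_column (n - 1) _ _ _ _ (row _ _).
have -> : 1 + (n - 1) = n by lia.
have -> : 2 * g - 1 + (n - 1) = 2 * g + n - 2 by lia.
have -> : 3 * g - 2 + (n - 1) = 3 * g + n - 3 by lia.
by apply; lia.
Qed.

Theorem proposition2p4 (g n : nat) (hn : 1 <= n) :
  num_pants_graphs g n <= n * g ^ (3 * g) * (3 * g + 3 * n - 3) ^ n.
Proof.
rewrite /num_pants_graphs; case: ifP => // _.
have classes := card_classes_le (2 * g + n - 2) hn.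
have [V0 | V_gt0] := posnP (2 * g + n - 2).
  by move: classes; rewrite V0 fact0 expn0 !muln1 mul0n leqn0 => /eqP ->.
set V := 2 * g + n - 2 in classes V_gt0 *; set k := 3 * g + n - 3.
have half_edges : 3 * V = n + 2 * k by move: V_gt0; rewrite /V /k; lia.
have graphs := card_pseudo3_le half_edges.
have three_le : 3 <= 2 * g + n by move: V_gt0; rewrite /V; lia.
have e_exp : k + 2 * n = 3 * g + 3 * n - 3 by rewrite /k; lia.
have counting := pants_ineq_holds hn three_le.
rewrite /pants_ineq -/V -/k e_exp in counting.
have aut_gt0 : 0 < (V`! * 3 ^ V) * (n`! * k`! * 2 ^ k) by rewrite !muln_gt0 !fact_gt0 !expn_gt0.
rewrite -(leq_pmul2r aut_gt0) mulnA.
apply: leq_trans (leq_mul classes (leqnn _)) _.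
rewrite -mulnA; apply: leq_trans (leq_mul (leqnn _) graphs) _.
by apply: leq_trans counting _; rewrite !mulnA.
Qed.
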